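(* Let $\lambda\in\mathbb{C}$ be a generic parameter and consider the six equations on the eight vertex values $(u_0,u_1,u_2,u_{12},v_0,v_1,v_2,v_{12})$ of a cube: \[ \mathcal A:\ u_{12}-u_0-\frac{1}{u_2}+\frac{1}{u_1}=0,\qquad \mathcal S:\ u_0-v_{12}-\frac{1}{u_1}+\frac{\lambda}{v_2}=0, \] \[ \mathcal B:\ (u_0-v_0)\Big(\frac1{u_0}+v_2\Big)-1+\lambda=0,\qquad \mathcal B':\ (u_1-v_1)\Big(\frac1{u_1}+v_{12}\Big)-1+\lambda=0, \] \[ \mathcal C:\ \frac1{u_0}-\frac{\lambda}{v_0}-u_1+v_1=0,\qquad \mathcal C':\ \frac1{u_2}-\frac{\lambda}{v_2}-u_{12}+v_{12}=0. \] For generic initial values $u_0,u_1,u_2,v_0\in\mathbb{C}$, solve $\mathcal A=0$ for $u_{12}$, $\mathcal B=0$ for $v_2$ and $\mathcal C=0$ for $v_1$ (each as a rational function of the initial values). Then the three expressions for $v_{12}$ obtained by solving $\mathcal S=0$, $\mathcal B'=0$ and $\mathcal C'=0$ respectively coincide as rational functions of $u_0,u_1,u_2,v_0$ (i.e. the system is consistent around a broken cube). Moreover, with these values the following tetrahedron equations hold identically: \[ \mathcal K_1:\ \Big(v_{12}+\frac1{u_1}\Big)\Big(\frac1{u_0}-\frac{\lambda}{v_0}\Big)-1+\lambda=0,\qquad \mathcal K_2:\ \Big(\frac{\lambda}{v_2}+u_0\Big)(u_1-v_1)-1+\lambda=0. \]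
   Context: Hirota's discrete KdV (dKdV) equation is the partial difference equation $u_{l+1,m+1}-u_{l,m}=\frac{1}{u_{l,m+1}}-\frac{1}{u_{l+1,m}}$ for $u:\mathbb{Z}^2\to\mathbb{C}$. In the cube picture, $u_0=u_{l,m}$, $u_1=u_{l+1,m}$, $u_2=u_{l,m+1}$, $u_{12}=u_{l+1,m+1}$ and $v_0,v_1,v_2,v_{12}$ are the corresponding values of an auxiliary function $v$ on the parallel face; $\mathcal A$ is the dKdV equation. Generic means all denominators appearing are nonzero. *)

From HB Require Import structures.
From mathcomp Require Import all_boot all_order all_algebra.
From mathcomp Require Import complex.
From mathcomp Require Import reals.
Set Implicit Arguments. Unset Strict Implicit. Unset Printing Implicit Defensive.
Import Order.TTheory GRing.Theory Num.Theory.
Local Open Scope ring_scope.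

Section CubeEqs.
Variable C : fieldType.
Variable lam : C.

Definition faceA (u0 u1 u2 u12 : C) : C := u12 - u0 - 1 / u2 + 1 / u1.
Definition faceS (u0 u1 v2 v12 : C) : C := u0 - v12 - 1 / u1 + lam / v2.
Definition faceB (u0 v0 v2 : C) : C := (u0 - v0) * (1 / u0 + v2) - 1 + lam.
Definition faceB' (u1 v1 v12 : C) : C := (u1 - v1) * (1 / u1 + v12) - 1 + lam.
Definition faceC (u0 u1 v0 v1 : C) : C := 1 / u0 - lam / v0 - u1 + v1.
Definition faceC' (u2 u12 v2 v12 : C) : C := 1 / u2 - lam / v2 - u12 + v12.

Definition faceK1 (u0 u1 v0 v12 : C) : C :=
  (v12 + 1 / u1) * (1 / u0 - lam / v0) - 1 + lam.
Definition faceK2 (u0 u1 v1 v2 : C) : C :=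
  (lam / v2 + u0) * (u1 - v1) - 1 + lam.
End CubeEqs.

(* The proof works over an arbitrary field F and rests on three ring
   identities between the face polynomials, valid for all vertex values:
     C'  = -(S + A),
     B'  = K2 - (u1 - v1) * S,
     K1  = B' + (v12 + 1/u1) * C.
   The only genuine computation is that the tetrahedron equation K2 holds
   as soon as the initial faces B and C do: solving B for lam (rather than
   for v2) turns K2 into a rational identity in u0, v0, v2.
   Given A = B = C = 0 we thus get K2 = 0, hence B' = -(u1 - v1) S and
   C' = -S; since u1 <> v1 the three equations S, B', C' determine the same
   v12, and then K1 = B' = 0. *)
From HB Require Import structures.
From mathcomp Require Import all_boot all_order all_algebra.
From mathcomp Require Import complex.
From mathcomp Require Import reals.
From mathcomp Require Import ring.
Set Implicit Arguments. Unset Strict Implicit. Unset Printing Implicit Defensive.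
Import Order.TTheory GRing.Theory Num.Theory.
Local Open Scope ring_scope.
Local Open Scope complex_scope.

Section BrokenCube.
Variables (F : fieldType) (lam : F).

Lemma faceC'_SA (u0 u1 u2 u12 v2 v12 : F) :
  faceC' lam u2 u12 v2 v12 = - (faceS lam u0 u1 v2 v12 + faceA u0 u1 u2 u12).
Proof. rewrite /faceC' /faceS /faceA; ring. Qed.

Lemma faceB'_K2S (u0 u1 v1 v2 v12 : F) :
  faceB' lam u1 v1 v12
  = faceK2 lam u0 u1 v1 v2 - (u1 - v1) * faceS lam u0 u1 v2 v12.
Proof. rewrite /faceB' /faceK2 /faceS; ring. Qed.

Lemma faceK1_B'C (u0 u1 v0 v1 v12 : F) :
  faceK1 lam u0 u1 v0 v12
  = faceB' lam u1 v1 v12 + (v12 + 1 / u1) * faceC lam u0 u1 v0 v1.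
Proof. rewrite /faceK1 /faceB' /faceC; ring. Qed.

Lemma faceK2_of_BC (u0 u1 v0 v1 v2 : F) :
  u0 != 0 -> v0 != 0 -> v2 != 0 ->
  faceB lam u0 v0 v2 = 0 -> faceC lam u0 u1 v0 v1 = 0 ->
  faceK2 lam u0 u1 v1 v2 = 0.
Proof.
move=> hu0 hv0 hv2; rewrite /faceB /faceC => hB hC.
have elam : lam = 1 - (u0 - v0) * (1 / u0 + v2).
  by rewrite -[LHS]subr0 -hB; ring.
have ediff : 1 / u0 - lam / v0 = u1 - v1.
  by rewrite -[LHS]subr0 -hC; ring.
by rewrite /faceK2 -ediff elam; field; rewrite hu0 hv0 hv2.
Qed.

End BrokenCube.

Theorem mainTheorem1 (R : realType) (lam u0 u1 u2 v0 u12 v1 v2 : R[i])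
  (hu0 : u0 != 0) (hu1 : u1 != 0) (hu2 : u2 != 0) (hv0 : v0 != 0)
  (hu0v0 : u0 != v0) (hv2 : v2 != 0) (hu1v1 : u1 != v1)
  (hA : faceA u0 u1 u2 u12 = 0) (hB : faceB lam u0 v0 v2 = 0)
  (hC : faceC lam u0 u1 v0 v1 = 0) :
  forall v12 : R[i],
    (faceS lam u0 u1 v2 v12 = 0 <-> faceB' lam u1 v1 v12 = 0) /\
    (faceS lam u0 u1 v2 v12 = 0 <-> faceC' lam u2 u12 v2 v12 = 0) /\
    (faceS lam u0 u1 v2 v12 = 0 ->
       faceK1 lam u0 u1 v0 v12 = 0 /\ faceK2 lam u0 u1 v1 v2 = 0).
Proof.
move=> v12.
have hK2 := faceK2_of_BC hu0 hv0 hv2 hB hC.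
have hB' : faceB' lam u1 v1 v12 = - ((u1 - v1) * faceS lam u0 u1 v2 v12).
  by rewrite (faceB'_K2S lam u0 u1 v1 v2) hK2 sub0r.
have hC' : faceC' lam u2 u12 v2 v12 = - faceS lam u0 u1 v2 v12.
  by rewrite (faceC'_SA lam u0 u1) hA addr0.
have hdiff : u1 - v1 != 0 by rewrite subr_eq0.
have hSB' : faceS lam u0 u1 v2 v12 = 0 <-> faceB' lam u1 v1 v12 = 0.
  rewrite hB'; split=> [-> | /eqP]; first by rewrite mulr0 oppr0.
  by rewrite oppr_eq0 mulf_eq0 (negbTE hdiff) => /eqP.
split; first exact: hSB'.
split.
  rewrite hC'; split=> [-> | hS]; first by rewrite oppr0.
  by rewrite -[faceS _ _ _ _ _]opprK hS oppr0.
move=> hS; split=> //.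
by rewrite (faceK1_B'C lam u0 u1 v0 v1) hC mulr0 addr0; apply/hSB'.
Qed.
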